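(* The complex conjugation map $\mathrm{Conj}:K\to K$, $$(z_1,\dots,z_{n-1};A^{(0)},(a_0^{(1)},A^{(1)}),\dots,(a_0^{(n)},A^{(n)}))\mapsto(\bar z_1,\dots,\bar z_{n-1};\overline{A^{(0)}},(\overline{a_0^{(1)}},\overline{A^{(1)}}),\dots,(\overline{a_0^{(n)}},\overline{A^{(n)}})),$$ is a partial operad automorphism of the sphere partial operad $K$; in particular, for $P\in K(m)$, $Q\in K(n)$ and $1\le i\le m$ such that $P\,{}_i\infty_0\,Q$ exists, $\overline{P}\,{}_i\infty_0\,\overline{Q}$ exists and $\overline{P\,{}_i\infty_0\,Q}=\overline{P}\,{}_i\infty_0\,\overline{Q}$, where $\overline{R}:=\mathrm{Conj}(R)$.
   Context: Sphere partial operad $K=\{K(n)\}_{n\in\mathbb{N}}$: $K(n)$ is the moduli space of conformal equivalence classes of spheres with tubes of type $n$, i.e. Riemann spheres with one negatively oriented puncture and $n$ ordered positively oriented punctures, each equipped with a local analytic coordinate vanishing at the puncture (equivalence: biholomorphisms preserving punctures, their order and the germs of the local coordinates). For $n\ge1$ each class has a unique canonical representative: $\hat{\mathbb{C}}$ with negative puncture at $\infty$ with local coordinate $f_0(w)=-\exp\big(-\sum_{j\ge1}A^{(0)}_jw^{-j+1}\frac{d}{dw}\big)\frac1w$ (so $\lim_{w\to\infty}wf_0(w)=-1$), positive punctures $z_1,\dots,z_{n-1}\in\mathbb{C}^\times$ and $z_n=0$ (pairwise distinct), with local coordinates $f_i(w)=\exp\big(\sum_{j\ge1}A^{(i)}_jx^{j+1}\frac{d}{dx}\big)(a_0^{(i)})^{x\frac{d}{dx}}x\big|_{x=w-z_i}$,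 where $a_0^{(i)}\in\mathbb{C}^\times$ and $A^{(i)}=(A^{(i)}_j)_{j\ge1}$ are complex sequences for which these series converge near $0$; this class is denoted $(z_1,\dots,z_{n-1};A^{(0)},(a_0^{(1)},A^{(1)}),\dots,(a_0^{(n)},A^{(n)}))$ (for $n=0$ only $A^{(0)}$ with $A^{(0)}_1=0$ remains). Bars denote componentwise complex conjugation. Sewing: for $P\in K(m)$, $Q\in K(n)$, $1\le i\le m$, let $f_i$ be the local coordinate at the $i$-th positive puncture $p$ of $P$ and $g_0$ the one at the negative puncture $q$ of $Q$; if there is $r>0$ with $p$ the only puncture in $f_i^{-1}(\overline{B_r})$ and $q$ the only puncture in $g_0^{-1}(\overline{B_{1/r}})$ ($B_r$ the open disk of radius $r$ about $0$), then $P\,{}_i\infty_0\,Q\in K(m+n-1)$ is the class of the sphere obtained by removing $f_i^{-1}(B_r)$ and $g_0^{-1}(B_{1/r})$ and gluing the boundaries via $g_0^{-1}\circ J\circ f_i$, $J(w)=-1/w$, keeping $P$'s negative puncture and ordering the positive punctures as the first $i-1$ of $P$, then those of $Q$, then the remaining ones of $P$. With these partial substitution maps, the identity $(\,;\mathbf{0},(1,\mathbf{0}))\in K(1)$ and the $S_n$-actions permuting positive punctures, $K$ is a partial operad. A partial operad automorphism is a family of bijections $K(n)\to K(n)$ fixing the identity, commuting with the symmetric group actions, and compatible with sewing (whenever $P\,{}_i\infty_0\,Q$ exists, the image sewing exists and equals the image of $P\,{}_i\infty_0\,Q$). *)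

From Stdlib Require Import Reals Arith ClassicalEpsilon.
From Coquelicot Require Import Coquelicot.

Open Scope R_scope.

(* Riemann sphere  Chat = C u {oo}, None = oo                           *)
Definition Chat := option C.

Definition Csub (a b : C) : C := Cplus a (Copp b).

Fixpoint cpow (u : C) (m : nat) : C :=
  match m with O => RtoC 1 | S k => Cmult u (cpow u k) end.

Definition cball (x : Chat) (e : R) : Chat -> Prop :=
  match x with
  | Some z => fun y => exists w, y = Some w /\ Cmod (Csub w z) < e
  | None => fun y => y = None \/ exists w, y = Some w /\ e * Cmod w > 1
  end.

Definition near_hat (x : Chat) (P : Chat -> Prop) : Prop :=
  exists e, 0 < e /\ forall y, cball x e y -> P y.
Definition near_C (z : C) (P : C -> Prop) : Prop :=
  exists e, 0 < e /\ forall w, Cmod (Csub w z) < e -> P w.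
Definition openC (V : C -> Prop) : Prop := forall z, V z -> near_C z V.

(* standard charts of the Riemann sphere centred at x (chart value 0 at x) *)
Definition loc (x : Chat) (y : Chat) : C :=
  match x, y with
  | Some z, Some w => Csub w z
  | None, Some w => Cinv w
  | _, None => RtoC 0
  end.
Definition emb (x : Chat) (u : C) : Chat :=
  match x with
  | Some z => Some (Cplus u z)
  | None => if excluded_middle_informative (u = RtoC 0) then None
            else Some (Cinv u)
  end.

Definition holoCH (g : C -> Chat) (u0 : C) : Prop :=
  (forall e, 0 < e -> near_C u0 (fun u => cball (g u0) e (g u))) /\
  ex_derive (fun u : C => loc (g u0) (g u)) u0.
Definition holoHH (F : Chat -> Chat) (x : Chat) : Prop :=
  holoCH (fun u => F (emb x u)) (RtoC 0).

(* sequences A : nat -> C are indexed so that A j = A_j (A 0 unused)    *)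
Fixpoint sumC (n : nat) (f : nat -> C) : C :=
  match n with O => RtoC 0 | S k => Cplus (sumC k f) (f k) end.

(* coefficients of D g, D = sum_{j>=1} A_j x^{j+1} d/dx *)
Definition Dop (A : nat -> C) (g : nat -> C) : nat -> C :=
  fun m => sumC m (fun j => match j with
                          | O => RtoC 0
                          | S _ => Cmult (A j) (Cmult (RtoC (INR (m - j)%nat)) (g (m - j)%nat))
                          end).
Definition xcoef : nat -> C := fun m => if Nat.eqb m 1 then RtoC 1 else RtoC 0.
Definition powD (A : nat -> C) (k : nat) : nat -> C := Nat.iter k (Dop A) xcoef.
(* coefficient of x^m in exp(D) x *)
Definition expcoef (A : nat -> C) (m : nat) : C :=
  sumC (S m) (fun k => Cdiv (powD A k m) (RtoC (INR (fact k)))).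

Definition conv (A : nat -> C) : Prop :=
  exists rho, 0 < rho /\ forall u, Cmod u < rho ->
    ex_series (fun m => Cmult (expcoef A m) (cpow u m)).

(* Canonical representatives of elements of K(n)                        *)
Record KD := mkKD {
  zs : nat -> C;            (* zs k = z_k, 1 <= k <= n-1 *)
  A0 : nat -> C;            (* A0 j = A^(0)_j, j >= 1 *)
  a0s : nat -> C;           (* a0s k = a_0^(k), 1 <= k <= n *)
  As : nat -> nat -> C      (* As k j = A^(k)_j, 1 <= k <= n, j >= 1 *)
}.

(* membership in K(n); unused entries are normalised to 0 so that
   elements of K(n) correspond bijectively to [{d | valid n d}] *)
Definition valid (n : nat) (d : KD) : Prop :=
  (forall k, ~ (1 <= k <= n - 1)%nat -> zs d k = RtoC 0) /\
  (forall k, ~ (1 <= k <= n)%nat -> a0s d k = RtoC 0 /\ forall j, As d k j = RtoC 0) /\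
  A0 d 0%nat = RtoC 0 /\ (forall k, As d k 0%nat = RtoC 0) /\
  conv (A0 d) /\
  (n = 0%nat -> A0 d 1%nat = RtoC 0) /\
  (forall k, (1 <= k <= n - 1)%nat -> zs d k <> RtoC 0) /\
  (forall k l, (1 <= k <= n - 1)%nat -> (1 <= l <= n - 1)%nat -> k <> l -> zs d k <> zs d l) /\
  (forall k, (1 <= k <= n)%nat -> a0s d k <> RtoC 0 /\ conv (As d k)).

Definition pts (n : nat) (d : KD) (k : nat) : Chat :=
  if Nat.eqb k 0 then None
  else if Nat.eqb k n then Some (RtoC 0) else Some (zs d k).

(* local coordinates, as (functional) relations "f_k(x) = v":
   f_0(w) = -exp(-sum A_j w^{-j+1} d/dw)(1/w) = - exp(sum A_j u^{j+1} d/du) u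
   with u = 1/w (change of variables), and
   f_k(w) = exp(sum A_j x^{j+1} d/dx) a0^{x d/dx} x at x = w - z_k
          = a0 * exp(sum A_j x^{j+1} d/dx) x. *)
Definition lc (n : nat) (d : KD) (k : nat) (x : Chat) (v : C) : Prop :=
  if Nat.eqb k 0 then
    is_series (fun m => Copp (Cmult (expcoef (A0 d) m) (cpow (loc None x) m))) v
  else
    is_series (fun m => Cmult (a0s d k)
                 (Cmult (expcoef (As d k) m) (cpow (loc (pts n d k) x) m))) v.

Definition idK : KD :=
  mkKD (fun _ => RtoC 0) (fun _ => RtoC 0)
       (fun k => if Nat.eqb k 1 then RtoC 1 else RtoC 0) (fun _ _ => RtoC 0).

Definition isPerm (n : nat) (s : nat -> nat) : Prop :=
  (forall k, (1 <= k <= n)%nat -> (1 <= s k <= n)%nat) /\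
  (forall k l, (1 <= k <= n)%nat -> (1 <= l <= n)%nat -> s k = s l -> k = l).

(* the sphere with tubes of P, its positive punctures reordered by s
   (new k-th puncture = old (s k)-th), is conformally equivalent to R *)
Definition PermRel (n : nat) (s : nat -> nat) (P R : KD) : Prop :=
  let s' := fun k => if Nat.eqb k 0 then 0%nat else s k in
  exists T Tinv : Chat -> Chat,
    (forall x, holoHH T x) /\ (forall x, holoHH Tinv x) /\
    (forall x, Tinv (T x) = x) /\ (forall y, T (Tinv y) = y) /\
    (forall k, (k <= n)%nat -> T (pts n P (s' k)) = pts n R k) /\
    (forall k, (k <= n)%nat ->
       near_hat (pts n P (s' k))
         (fun x => forall v, lc n P (s' k) x v <-> lc n R k (T x) v)).

(* phi : a representative of f_i^{-1} on a neighbourhood of the closed  *)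
(*       disk |w| <= r (so f_i^{-1}(B_r) = phi(B_r));                   *)
(* psi : a representative of g_0^{-1} on a neighbourhood of |w| <= 1/r. *)
Definition invDisk (g : C -> Chat) (rad : R) (p : Chat) (L : Chat -> C -> Prop) : Prop :=
  (exists V, openC V /\ (forall w, Cmod w <= rad -> V w) /\
     (forall w, V w -> holoCH g w) /\
     (forall w1 w2, V w1 -> V w2 -> g w1 = g w2 -> w1 = w2)) /\
  g (RtoC 0) = p /\ near_C (RtoC 0) (fun w => L (g w) w).

Definition SewData (m n : nat) (P : KD) (i : nat) (Q : KD)
    (r : R) (phi psi : C -> Chat) : Prop :=
  0 < r /\
  invDisk phi r (pts m P i) (lc m P i) /\
  invDisk psi (/ r) (pts n Q 0) (lc n Q 0) /\
  (forall k, (k <= m)%nat -> k <> i -> forall w, Cmod w <= r -> phi w <> pts m P k) /\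
  (forall k, (1 <= k <= n)%nat -> forall w, Cmod w <= / r -> psi w <> pts n Q k).

Definition SewExists (m n : nat) (P : KD) (i : nat) (Q : KD) : Prop :=
  exists r phi psi, SewData m n P i Q r phi psi.

(* the sewn sphere is conformally equivalent to R: F1, F2 are the
   restrictions to the two pieces of a biholomorphism from the sewn
   surface onto R's sphere *)
Definition Glue (m n : nat) (P : KD) (i : nat) (Q Rk : KD)
    (r : R) (phi psi : C -> Chat) : Prop :=
  let X1 := fun x => forall w, Cmod w < r -> phi w <> x in
  let X2 := fun x => forall w, Cmod w < / r -> psi w <> x in
  let N := (m + n - 1)%nat in
  exists F1 F2 : Chat -> Chat,
    (forall x y, X1 x -> X1 y -> F1 x = F1 y -> x = y) /\
    (forall x y, X2 x -> X2 y -> F2 x = F2 y -> x = y) /\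
    (forall w, Cmod w = r -> F1 (phi w) = F2 (psi (Copp (Cinv w)))) /\
    (forall x y, X1 x -> X2 y -> F1 x = F2 y ->
       exists w, Cmod w = r /\ x = phi w /\ y = psi (Copp (Cinv w))) /\
    (forall y, (exists x, X1 x /\ F1 x = y) \/ (exists x, X2 x /\ F2 x = y)) /\
    (* holomorphy: in the interiors of the pieces ... *)
    (forall x, (forall w, Cmod w <= r -> phi w <> x) -> holoHH F1 x) /\
    (forall x, (forall w, Cmod w <= / r -> psi w <> x) -> holoHH F2 x) /\
    (* ... and in the annular chart around the seam *)
    (exists delta, 0 < delta /\ forall w, r - delta < Cmod w < r + delta ->
       holoCH (fun u => if Rle_dec r (Cmod u) then F1 (phi u)
                        else F2 (psi (Copp (Cinv u)))) w) /\
    F1 (pts m P 0) = pts N Rk 0 /\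
    (forall k, (1 <= k < i)%nat -> F1 (pts m P k) = pts N Rk k) /\
    (forall k, (1 <= k <= n)%nat -> F2 (pts n Q k) = pts N Rk (i + k - 1)) /\
    (forall k, (i < k <= m)%nat -> F1 (pts m P k) = pts N Rk (k + n - 1)) /\
    near_hat (pts m P 0) (fun x => forall v, lc m P 0 x v <-> lc N Rk 0 (F1 x) v) /\
    (forall k, (1 <= k < i)%nat ->
       near_hat (pts m P k) (fun x => forall v, lc m P k x v <-> lc N Rk k (F1 x) v)) /\
    (forall k, (1 <= k <= n)%nat ->
       near_hat (pts n Q k) (fun x => forall v, lc n Q k x v <-> lc N Rk (i + k - 1) (F2 x) v)) /\
    (forall k, (i < k <= m)%nat ->
       near_hat (pts m P k) (fun x => forall v, lc m P k x v <-> lc N Rk (k + n - 1) (F1 x) v)).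

Definition Sew (m n : nat) (P : KD) (i : nat) (Q Rk : KD) : Prop :=
  exists r phi psi, SewData m n P i Q r phi psi /\ Glue m n P i Q Rk r phi psi.

Definition IsPartialOperadAut (Phi : nat -> KD -> KD) : Prop :=
  (forall n d, valid n d -> valid n (Phi n d)) /\
  (forall n d1 d2, valid n d1 -> valid n d2 -> Phi n d1 = Phi n d2 -> d1 = d2) /\
  (forall n d, valid n d -> exists d', valid n d' /\ Phi n d' = d) /\
  Phi 1%nat idK = idK /\
  (forall n s, isPerm n s -> forall P R, valid n P -> valid n R ->
     PermRel n s P R -> PermRel n s (Phi n P) (Phi n R)) /\
  (forall m n i P Q, (1 <= i <= m)%nat -> valid m P -> valid n Q ->
     SewExists m n P i Q ->
     SewExists m n (Phi m P) i (Phi n Q) /\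
     forall R, valid (m + n - 1) R -> Sew m n P i Q R ->
       Sew m n (Phi m P) i (Phi n Q) (Phi (m + n - 1)%nat R)).

Definition ConjK (d : KD) : KD :=
  mkKD (fun k => Cconj (zs d k)) (fun j => Cconj (A0 d j))
       (fun k => Cconj (a0s d k)) (fun k j => Cconj (As d k j)).

From Stdlib Require Import Reals Lra FunctionalExtensionality ClassicalEpsilon.
From Coquelicot Require Import Coquelicot.

(** Complex conjugation [c] extends to an anti-holomorphic involution of the
    Riemann sphere fixing [0] and [oo] and commuting with the standard charts.
    Conjugating maps by [c] ([F |-> c o F o c]) preserves continuity and complex
    differentiability (the derivative gets conjugated), and the coefficients of
    [exp(sum A_j x^(j+1) d/dx) x] are polynomials with real coefficients in the
    [A_j], so conjugating the [A_j] conjugates the local coordinates.  Hence every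
    witness (biholomorphism, local inverse of a coordinate, gluing map) for data
    [P], [Q], [P _i oo_0 Q] conjugates to a witness for the conjugated data, and
    [Conj] is an involution of each [K(n)]. *)

Lemma RtoC_conj (r : R) : Cconj (RtoC r) = RtoC r.
Proof. apply injective_projections; simpl; lra. Qed.

(* Also at [0], since [Cinv 0 = 0]. *)
Lemma Cinv_conj_total (z : C) : Cconj (Cinv z) = Cinv (Cconj z).
Proof.
  destruct (Ceq_dec z 0) as [->|Hz]; [|exact (Cinv_conj z Hz)].
  apply injective_projections; simpl; unfold Rdiv; rewrite ?Rmult_0_l, ?Ropp_0; ring.
Qed.

Lemma Copp_Cinv_conj (w : C) : Cconj (Copp (Cinv w)) = Copp (Cinv (Cconj w)).
Proof. rewrite Copp_conj, Cinv_conj_total. reflexivity. Qed.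

Lemma Cconj_inj (a b : C) : Cconj a = Cconj b -> a = b.
Proof. intros E. rewrite <- (Cconj_conj a), E, Cconj_conj. reflexivity. Qed.

Lemma Cconj_eq0 (z : C) : Cconj z = RtoC 0 <-> z = RtoC 0.
Proof.
  rewrite <- (RtoC_conj 0) at 1. split; [apply Cconj_inj | intros ->; reflexivity].
Qed.

Lemma Csub_conj (a b : C) : Cconj (Csub a b) = Csub (Cconj a) (Cconj b).
Proof. unfold Csub. rewrite Cplus_conj, Copp_conj. reflexivity. Qed.

Lemma Cmod_Csub_conj (a b : C) : Cmod (Csub (Cconj a) (Cconj b)) = Cmod (Csub a b).
Proof. rewrite <- Csub_conj. apply Cmod_conj. Qed.

Definition Chat_conj (x : Chat) : Chat := option_map Cconj x.

Definition conjCH (g : C -> Chat) : C -> Chat := fun u => Chat_conj (g (Cconj u)).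
Definition conjHH (F : Chat -> Chat) : Chat -> Chat := fun x => Chat_conj (F (Chat_conj x)).

Lemma Chat_conjK (x : Chat) : Chat_conj (Chat_conj x) = x.
Proof. destruct x; simpl; rewrite ?Cconj_conj; reflexivity. Qed.

Lemma Chat_conj_inj (x y : Chat) : Chat_conj x = Chat_conj y -> x = y.
Proof. intros E. rewrite <- (Chat_conjK x), E, Chat_conjK. reflexivity. Qed.

Lemma loc_conj (x y : Chat) : loc (Chat_conj x) (Chat_conj y) = Cconj (loc x y).
Proof.
  destruct x, y; simpl; rewrite ?Csub_conj, ?Cinv_conj_total, ?RtoC_conj; reflexivity.
Qed.

Lemma emb_conj (x : Chat) (u : C) : Chat_conj (emb x u) = emb (Chat_conj x) (Cconj u).
Proof.
  destruct x as [z|]; simpl; [rewrite Cplus_conj; reflexivity|].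
  destruct (excluded_middle_informative (u = RtoC 0)) as [Hu|Hu];
  destruct (excluded_middle_informative (Cconj u = RtoC 0)) as [Hu'|Hu'];
  rewrite Cconj_eq0 in Hu'; try contradiction; simpl; rewrite ?Cinv_conj_total; reflexivity.
Qed.

Lemma cball_conj (x : Chat) (e : R) (y : Chat) :
  cball (Chat_conj x) e (Chat_conj y) <-> cball x e y.
Proof.
  destruct x as [z|], y as [w|]; simpl; split.
  - intros [w' [[= <-] H]]. exists w. rewrite Cmod_Csub_conj in H. auto.
  - intros [w' [[= <-] H]]. exists (Cconj w). rewrite Cmod_Csub_conj. auto.
  - intros [w' [? _]]; discriminate.
  - intros [w' [? _]]; discriminate.
  - intros [?|[w' [[= <-] H]]]; [discriminate|]. rewrite Cmod_conj in H. eauto.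
  - intros [?|[w' [[= <-] H]]]; [discriminate|]. right. exists (Cconj w). rewrite Cmod_conj. auto.
  - auto.
  - auto.
Qed.

Lemma near_hat_conj (x : Chat) (P : Chat -> Prop) :
  near_hat x P -> near_hat (Chat_conj x) (fun y => P (Chat_conj y)).
Proof.
  intros [e [He H]]. exists e. split; [exact He|]. intros y Hy. apply H.
  rewrite <- cball_conj, Chat_conjK. exact Hy.
Qed.

Lemma near_hat_impl (x : Chat) (P Q : Chat -> Prop) :
  near_hat x P -> (forall y, P y -> Q y) -> near_hat x Q.
Proof. intros [e [He H]] HPQ. exists e. auto. Qed.

Lemma near_C_conj (z : C) (P : C -> Prop) :
  near_C z P -> near_C (Cconj z) (fun w => P (Cconj w)).
Proof.
  intros [e [He H]]. exists e. split; [exact He|]. intros w Hw. apply H.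
  rewrite <- Cmod_Csub_conj, Cconj_conj. exact Hw.
Qed.

Lemma openC_conj (V : C -> Prop) : openC V -> openC (fun w => V (Cconj w)).
Proof.
  intros HV z Hz. apply HV, near_C_conj in Hz. rewrite Cconj_conj in Hz. exact Hz.
Qed.

(* [C] carries two uniform structures: the product one, used by [is_series], and
   the one of the absolute value of [C_AbsRing], used by [ex_derive]. *)
Lemma locally_Cconj (x : C) (P : C -> Prop) :
  locally x P -> locally (Cconj x) (fun y => P (Cconj y)).
Proof.
  intros [eps H]. exists eps. intros [y1 y2] [H1 H2]. apply H. destruct x as [x1 x2].
  split; [exact H1|]. revert H2. unfold ball; simpl.
  unfold AbsRing_ball, abs, minus, plus, opp; simpl.
  rewrite <- (Rabs_Ropp (- y2 + - x2)). replace (- (- y2 + - x2)) with (y2 + - - x2) by ring. auto.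
Qed.

Lemma locally_Cconj_abs (x : AbsRing_NormedModule C_AbsRing)
    (P : AbsRing_NormedModule C_AbsRing -> Prop) :
  locally x P -> locally (Cconj x : AbsRing_NormedModule C_AbsRing) (fun y => P (Cconj y)).
Proof.
  intros [eps H]. exists eps. intros y Hy. apply H.
  change (Cmod (Cconj y - x)%C < eps). change (Cmod (y - Cconj x)%C < eps) in Hy.
  rewrite <- Cmod_conj, Cminus_conj, Cconj_conj. exact Hy.
Qed.

Lemma sum_n_conj (a : nat -> C) (n : nat) :
  sum_n (fun m => Cconj (a m)) n = Cconj (sum_n a n).
Proof.
  induction n as [|n IH]; rewrite ?sum_O, ?sum_Sn; [reflexivity|].
  rewrite IH. symmetry. apply Cplus_conj.
Qed.

Lemma is_series_conj (a : nat -> C) (l : C) :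
  is_series a l -> is_series (fun m => Cconj (a m)) (Cconj l).
Proof.
  intros H. unfold is_series in *.
  apply filterlim_ext with (fun n => Cconj (sum_n a n)); [intros; symmetry; apply sum_n_conj|].
  apply filterlim_comp with (1 := H). intros P HP.
  apply locally_Cconj in HP. rewrite Cconj_conj in HP. exact HP.
Qed.

Lemma is_series_conj_iff (a : nat -> C) (l : C) :
  is_series (fun m => Cconj (a m)) (Cconj l) <-> is_series a l.
Proof.
  split; [|apply is_series_conj]. intros H. apply is_series_conj in H.
  rewrite Cconj_conj in H. revert H. apply is_series_ext. intros m. apply Cconj_conj.
Qed.

Lemma ex_series_conj (a : nat -> C) : ex_series a -> ex_series (fun m => Cconj (a m)).
Proof. intros [l H]. exists (Cconj l). apply is_series_conj, H. Qed.

Lemma ex_derive_conj (h : C -> C) (x : C) :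
  ex_derive h x -> ex_derive (fun u => Cconj (h (Cconj u))) (Cconj x).
Proof.
  intros [l [_ H]]. exists (Cconj l). split; [apply is_linear_scal_l|].
  intros y Hy. apply (@is_filter_lim_locally_unique _ (AbsRing_NormedModule C_AbsRing)) in Hy.
  subst y. intros eps. specialize (H x (fun P HP => HP) eps).
  apply locally_Cconj_abs in H. revert H. apply filter_imp. intros z Hz.
  (* the Taylor remainder of [conj o h o conj] at [z] is the conjugate of that of [h] at [conj z] *)
  change (Cmod ((Cconj (h (Cconj z)) - Cconj (h (Cconj (Cconj x)))) - (z - Cconj x) * Cconj l)%C
    <= eps * Cmod (z - Cconj x)%C).
  change (Cmod ((h (Cconj z) - h x) - (Cconj z - x) * l)%C <= eps * Cmod (Cconj z - x)%C) in Hz.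
  rewrite Cconj_conj, <- (Cmod_conj (z - Cconj x)%C), <- (Cmod_conj (_ - _)%C).
  repeat rewrite ?Cminus_conj, ?Cmult_conj, ?Cconj_conj. exact Hz.
Qed.

Lemma holoCH_conj (g : C -> Chat) (u0 : C) : holoCH g u0 -> holoCH (conjCH g) (Cconj u0).
Proof.
  intros [Hcont Hdiff]. unfold holoCH, conjCH. cbv beta. rewrite Cconj_conj. split.
  - intros e He. destruct (near_C_conj _ _ (Hcont e He)) as [d [Hd H]].
    exists d. split; [exact Hd|]. intros w Hw. apply cball_conj, H, Hw.
  - apply ex_derive_ext with (fun u => Cconj (loc (g u0) (g (Cconj u)))).
    + intros u. symmetry. apply loc_conj.
    + apply (ex_derive_conj (fun u => loc (g u0) (g u))), Hdiff.
Qed.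

Lemma holoHH_conj (F : Chat -> Chat) (x : Chat) :
  holoHH F (Chat_conj x) -> holoHH (conjHH F) x.
Proof.
  intros H. apply holoCH_conj in H. rewrite RtoC_conj in H. unfold holoHH.
  replace (fun u => conjHH F (emb x u)) with (conjCH (fun u => F (emb (Chat_conj x) u)));
    [exact H|].
  apply functional_extensionality. intros u. unfold conjHH, conjCH.
  rewrite emb_conj. reflexivity.
Qed.

Lemma sumC_conj (n : nat) (f : nat -> C) : Cconj (sumC n f) = sumC n (fun k => Cconj (f k)).
Proof.
  induction n as [|n IH]; simpl; [apply RtoC_conj|]. rewrite Cplus_conj, IH. reflexivity.
Qed.

Lemma cpow_conj (u : C) (m : nat) : Cconj (cpow u m) = cpow (Cconj u) m.
Proof.
  induction m as [|m IH]; simpl; [apply RtoC_conj|]. rewrite Cmult_conj, IH. reflexivity.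
Qed.

Lemma Dop_conj (A g : nat -> C) (m : nat) :
  Cconj (Dop A g m) = Dop (fun j => Cconj (A j)) (fun k => Cconj (g k)) m.
Proof.
  unfold Dop. rewrite sumC_conj. f_equal. apply functional_extensionality. intros [|j].
  - apply RtoC_conj.
  - rewrite !Cmult_conj, RtoC_conj. reflexivity.
Qed.

Lemma powD_conj (A : nat -> C) (k m : nat) :
  Cconj (powD A k m) = powD (fun j => Cconj (A j)) k m.
Proof.
  revert m. induction k as [|k IH]; intros m; simpl.
  - unfold xcoef. destruct (Nat.eqb m 1); apply RtoC_conj.
  - change (Cconj (Dop A (powD A k) m)
            = Dop (fun j => Cconj (A j)) (powD (fun j => Cconj (A j)) k) m).
    rewrite Dop_conj. f_equal. apply functional_extensionality. exact IH.
Qed.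

Lemma expcoef_conj (A : nat -> C) (m : nat) :
  Cconj (expcoef A m) = expcoef (fun j => Cconj (A j)) m.
Proof.
  unfold expcoef. rewrite sumC_conj. f_equal. apply functional_extensionality. intros k.
  unfold Cdiv. rewrite Cmult_conj, Cinv_conj_total, RtoC_conj, powD_conj. reflexivity.
Qed.

Lemma conv_conj (A : nat -> C) : conv A -> conv (fun j => Cconj (A j)).
Proof.
  intros [rho [Hrho H]]. exists rho. split; [exact Hrho|]. intros u Hu.
  rewrite <- Cmod_conj in Hu. apply H, ex_series_conj in Hu. revert Hu. apply ex_series_ext.
  intros m. rewrite Cmult_conj, expcoef_conj, cpow_conj, Cconj_conj. reflexivity.
Qed.

Lemma pts_conj (n : nat) (d : KD) (k : nat) : pts n (ConjK d) k = Chat_conj (pts n d k).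
Proof.
  unfold pts. destruct (Nat.eqb k 0); [reflexivity|].
  destruct (Nat.eqb k n); simpl; rewrite ?RtoC_conj; reflexivity.
Qed.

Lemma lc_conj_conj (n : nat) (d : KD) (k : nat) (x : Chat) (v : C) :
  lc n (ConjK d) k (Chat_conj x) (Cconj v) <-> lc n d k x v.
Proof.
  unfold lc. destruct (Nat.eqb k 0); rewrite <- (is_series_conj_iff _ v);
    split; apply is_series_ext; intros m;
    rewrite ?Copp_conj, !Cmult_conj, expcoef_conj, cpow_conj, <- loc_conj, ?pts_conj;
    reflexivity.
Qed.

Lemma lc_conj (n : nat) (d : KD) (k : nat) (y : Chat) (v : C) :
  lc n (ConjK d) k y v <-> lc n d k (Chat_conj y) (Cconj v).
Proof. rewrite <- (lc_conj_conj n d k (Chat_conj y)), Chat_conjK, Cconj_conj. reflexivity. Qed.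

Lemma near_lc_conj (a b : nat) (P R : KD) (k j : nat) (F : Chat -> Chat) :
  near_hat (pts a P k) (fun x => forall v, lc a P k x v <-> lc b R j (F x) v) ->
  near_hat (pts a (ConjK P) k)
    (fun x => forall v, lc a (ConjK P) k x v <-> lc b (ConjK R) j (conjHH F x) v).
Proof.
  intros H. rewrite pts_conj. apply (near_hat_impl _ _ _ (near_hat_conj _ _ H)).
  intros y Hy v. unfold conjHH. rewrite !lc_conj, Chat_conjK. apply Hy.
Qed.

Lemma conjHH_pts (a b : nat) (P R : KD) (k j : nat) (F : Chat -> Chat) :
  F (pts a P k) = pts b R j -> conjHH F (pts a (ConjK P) k) = pts b (ConjK R) j.
Proof. intros E. unfold conjHH. rewrite !pts_conj, Chat_conjK, E. reflexivity. Qed.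

Lemma ConjK_involutive (d : KD) : ConjK (ConjK d) = d.
Proof.
  destruct d. unfold ConjK. simpl.
  f_equal; repeat (apply functional_extensionality; intros); apply Cconj_conj.
Qed.

Lemma ConjK_idK : ConjK idK = idK.
Proof.
  unfold ConjK, idK. simpl.
  f_equal; repeat (apply functional_extensionality; intros); try apply RtoC_conj.
  destruct (Nat.eqb x 1); apply RtoC_conj.
Qed.

Lemma valid_conj (n : nat) (d : KD) : valid n d -> valid n (ConjK d).
Proof.
  intros (Hz & Ha & HA00 & HAk0 & Hconv & Hn0 & Hz0 & Hzinj & Hk).
  unfold valid. cbn [zs a0s As A0 ConjK].
  refine (conj _ (conj _ (conj _ (conj _ (conj _ (conj _ (conj _ (conj _ _)))))))).
  - intros k Hk'. rewrite Hz; [apply RtoC_conj | exact Hk'].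
  - intros k Hk'. destruct (Ha k Hk') as [Ea EA]. rewrite Ea.
    split; [apply RtoC_conj|]. intros j. rewrite EA. apply RtoC_conj.
  - rewrite HA00. apply RtoC_conj.
  - intros k. rewrite HAk0. apply RtoC_conj.
  - exact (conv_conj _ Hconv).
  - intros Hn. rewrite Hn0; [apply RtoC_conj | exact Hn].
  - intros k Hk' E. rewrite Cconj_eq0 in E. exact (Hz0 k Hk' E).
  - intros k l Hk' Hl Hkl E. exact (Hzinj k l Hk' Hl Hkl (Cconj_inj _ _ E)).
  - intros k Hk'. destruct (Hk k Hk') as [Ha0 HAconv]. split.
    + intros E. rewrite Cconj_eq0 in E. exact (Ha0 E).
    + exact (conv_conj _ HAconv).
Qed.

Lemma PermRel_conj (n : nat) (s : nat -> nat) (P R : KD) :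
  PermRel n s P R -> PermRel n s (ConjK P) (ConjK R).
Proof.
  intros (T & Tinv & HT & HTinv & HTK & HTinvK & Hpts & Hlc).
  exists (conjHH T), (conjHH Tinv).
  refine (conj _ (conj _ (conj _ (conj _ (conj _ _))))).
  - intros x. apply holoHH_conj, HT.
  - intros x. apply holoHH_conj, HTinv.
  - intros x. unfold conjHH. rewrite Chat_conjK, HTK, Chat_conjK. reflexivity.
  - intros y. unfold conjHH. rewrite Chat_conjK, HTinvK, Chat_conjK. reflexivity.
  - intros k Hk. apply conjHH_pts, Hpts, Hk.
  - intros k Hk. apply near_lc_conj, Hlc, Hk.
Qed.

Lemma avoids_conj (S : R -> Prop) (g : C -> Chat) (x : Chat) :
  (forall w, S (Cmod w) -> conjCH g w <> x) <-> (forall w, S (Cmod w) -> g w <> Chat_conj x).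
Proof.
  unfold conjCH. split; intros H w Hw E; apply (H (Cconj w)); rewrite ?Cmod_conj; try exact Hw.
  - rewrite Cconj_conj, E. apply Chat_conjK.
  - rewrite <- E, Chat_conjK. reflexivity.
Qed.

Lemma invDisk_conj (g : C -> Chat) (rad : R) (p : Chat) (L L' : Chat -> C -> Prop) :
  (forall y w, L (Chat_conj y) (Cconj w) -> L' y w) ->
  invDisk g rad p L -> invDisk (conjCH g) rad (Chat_conj p) L'.
Proof.
  intros HL ((V & HVopen & HVdisk & HVholo & HVinj) & Hp & Hnear).
  refine (conj _ (conj _ _)).
  - exists (fun w => V (Cconj w)). refine (conj _ (conj _ (conj _ _))).
    + apply openC_conj, HVopen.
    + intros w Hw. apply HVdisk. rewrite Cmod_conj. exact Hw.
    + intros w Hw. rewrite <- (Cconj_conj w). apply holoCH_conj, HVholo, Hw.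
    + intros w1 w2 H1 H2 E. apply Chat_conj_inj in E.
      apply Cconj_inj, HVinj; assumption.
  - unfold conjCH. rewrite RtoC_conj, Hp. reflexivity.
  - destruct (near_C_conj _ _ Hnear) as [e [He H]]. rewrite RtoC_conj in H.
    exists e. split; [exact He|]. intros w Hw. apply HL.
    unfold conjCH. rewrite Chat_conjK. apply H, Hw.
Qed.

Lemma SewData_conj (m n : nat) (P : KD) (i : nat) (Q : KD) (r : R) (phi psi : C -> Chat) :
  SewData m n P i Q r phi psi ->
  SewData m n (ConjK P) i (ConjK Q) r (conjCH phi) (conjCH psi).
Proof.
  intros (Hr & Hphi & Hpsi & HphiP & HpsiQ).
  refine (conj Hr (conj _ (conj _ (conj _ _)))).
  - rewrite pts_conj. revert Hphi. apply invDisk_conj. intros y w. apply lc_conj.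
  - rewrite pts_conj. revert Hpsi. apply invDisk_conj. intros y w. apply lc_conj.
  - intros k Hk Hki. apply (avoids_conj (fun t => t <= r)).
    rewrite pts_conj, Chat_conjK. exact (HphiP k Hk Hki).
  - intros k Hk. apply (avoids_conj (fun t => t <= / r)).
    rewrite pts_conj, Chat_conjK. exact (HpsiQ k Hk).
Qed.

Lemma holoCH_seam_conj (r : R) (F1 F2 : Chat -> Chat) (phi psi : C -> Chat) (w : C) :
  holoCH (fun u => if Rle_dec r (Cmod u) then F1 (phi u) else F2 (psi (Copp (Cinv u))))
    (Cconj w) ->
  holoCH (fun u => if Rle_dec r (Cmod u) then conjHH F1 (conjCH phi u)
                   else conjHH F2 (conjCH psi (Copp (Cinv u)))) w.
Proof.
  intros H. apply holoCH_conj in H. rewrite Cconj_conj in H.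
  refine (eq_ind _ (fun G => holoCH G w) H _ _).
  apply functional_extensionality. intros u. unfold conjCH, conjHH. rewrite Cmod_conj.
  destruct (Rle_dec r (Cmod u)); rewrite ?Chat_conjK, ?Copp_Cinv_conj, ?Cconj_conj; reflexivity.
Qed.

Lemma Glue_conj (m n : nat) (P : KD) (i : nat) (Q Rk : KD) (r : R) (phi psi : C -> Chat) :
  Glue m n P i Q Rk r phi psi ->
  Glue m n (ConjK P) i (ConjK Q) (ConjK Rk) r (conjCH phi) (conjCH psi).
Proof.
  intros (F1 & F2 & Hinj1 & Hinj2 & Hseam & Hseam' & Hsurj & Hholo1 & Hholo2 & Hannulus
          & Hpts0 & Hpts1 & Hpts2 & Hpts3 & Hlc0 & Hlc1 & Hlc2 & Hlc3).
  pose proof (avoids_conj (fun t => t < r) phi) as Hout1.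
  pose proof (avoids_conj (fun t => t < / r) psi) as Hout2.
  pose proof (avoids_conj (fun t => t <= r) phi) as Hext1.
  pose proof (avoids_conj (fun t => t <= / r) psi) as Hext2.
  cbv beta in Hout1, Hout2, Hext1, Hext2.
  exists (conjHH F1), (conjHH F2).
  refine (conj _ (conj _ (conj _ (conj _ (conj _ (conj _ (conj _ (conj _ (conj _ (conj _
          (conj _ (conj _ (conj _ (conj _ (conj _ _))))))))))))))).
  - intros x y Hx Hy E. apply Chat_conj_inj, Hinj1 in E;
      [exact (Chat_conj_inj _ _ E) | apply Hout1, Hx | apply Hout1, Hy].
  - intros x y Hx Hy E. apply Chat_conj_inj, Hinj2 in E;
      [exact (Chat_conj_inj _ _ E) | apply Hout2, Hx | apply Hout2, Hy].
  - intros w Hw. unfold conjHH, conjCH. rewrite !Chat_conjK, Copp_Cinv_conj, Hseam;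
      [reflexivity | rewrite Cmod_conj; exact Hw].
  - intros x y Hx Hy E. apply Chat_conj_inj, Hseam' in E; [|apply Hout1, Hx | apply Hout2, Hy].
    destruct E as (w & Hw & Ex & Ey). exists (Cconj w).
    unfold conjCH. rewrite Cmod_conj, Cconj_conj, <- Ex, Copp_Cinv_conj, Cconj_conj, <- Ey,
      !Chat_conjK. auto.
  - intros y. destruct (Hsurj (Chat_conj y)) as [(x & Hx & E) | (x & Hx & E)];
      [left | right]; exists (Chat_conj x); unfold conjHH;
      rewrite Chat_conjK, E, Chat_conjK; split; auto.
    + apply Hout1. rewrite Chat_conjK. exact Hx.
    + apply Hout2. rewrite Chat_conjK. exact Hx.
  - intros x Hx. apply holoHH_conj, Hholo1, Hext1, Hx.
  - intros x Hx. apply holoHH_conj, Hholo2, Hext2, Hx.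
  - destruct Hannulus as (delta & Hdelta & Hh). exists delta. split; [exact Hdelta|].
    intros w Hw. apply holoCH_seam_conj, Hh. rewrite Cmod_conj. exact Hw.
  - apply conjHH_pts, Hpts0.
  - intros k Hk. apply conjHH_pts, Hpts1, Hk.
  - intros k Hk. apply conjHH_pts, Hpts2, Hk.
  - intros k Hk. apply conjHH_pts, Hpts3, Hk.
  - apply near_lc_conj, Hlc0.
  - intros k Hk. apply near_lc_conj, Hlc1, Hk.
  - intros k Hk. apply near_lc_conj, Hlc2, Hk.
  - intros k Hk. apply near_lc_conj, Hlc3, Hk.
Qed.

Theorem proposition2p15 : IsPartialOperadAut (fun _ => ConjK).
Proof.
  refine (conj _ (conj _ (conj _ (conj ConjK_idK (conj _ _))))).
  - intros n d. apply valid_conj.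
  - intros n d1 d2 _ _ E.
    rewrite <- (ConjK_involutive d1), <- (ConjK_involutive d2), E. reflexivity.
  - intros n d Hd. exists (ConjK d). split; [apply valid_conj, Hd | apply ConjK_involutive].
  - intros n s _ P R _ _. apply PermRel_conj.
  - intros m n i P Q _ _ _ (r & phi & psi & Hsew). split.
    + exists r, (conjCH phi), (conjCH psi). apply SewData_conj, Hsew.
    + intros R _ (r' & phi' & psi' & Hsew' & Hglue).
      exists r', (conjCH phi'), (conjCH psi').
      split; [apply SewData_conj, Hsew' | apply Glue_conj, Hglue].
Qed.
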